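(* Let $x=[x_1,\dots,x_N]\in S_N$ contain a minimal $[4321]$-pattern at positions $p<q<r<s$, and let $x'$ be obtained from $x$ by exchanging the entries in positions $q$ and $r$ (so that $(x'_p,x'_q,x'_r,x'_s)$ is a $[4231]$-pattern). Then $\omega(\pi_{x'})=\omega(\pi_x)$.
   Context: Permutations are in one-line notation and composed as functions. $H_0(S_N)$ is generated by $\pi_1,\dots,\pi_{N-1}$ with $\pi_i^2=\pi_i$, $\pi_i\pi_j=\pi_j\pi_i$ for $|i-j|\ge2$, $\pi_i\pi_{i+1}\pi_i=\pi_{i+1}\pi_i\pi_{i+1}$; $\pi_w=\pi_{i_1}\cdots\pi_{i_k}$ for a reduced word $w=s_{i_1}\cdots s_{i_k}$. $\phi$ is the quotient morphism from $H_0(S_N)$ onto its quotient by the relations $\pi_i\pi_{i+1}\pi_i=\pi_i\pi_{i+1}$ ($1\le i\le N-2$), $\pi_i\mapsto\pi_i$; $\Psi$ is the automorphism of $H_0(S_N)$ with $\Psi(\pi_i)=\pi_{N-i}$; $\omega(y)=(\phi(y),\phi(\Psi(y)))$. A $[4321]$-pattern is a quadruple of positions $p<q<r<s$ with $x_p>x_q>x_r>x_s$; its width is $(q-p,r-q,s-r)$, and it is minimal if its width is lexicographically minimal among all $[4321]$-patterns in $x$. *)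

From mathcomp Require Import all_boot all_order all_fingroup.
From Stdlib Require Import Relations.
Set Implicit Arguments. Unset Strict Implicit. Unset Printing Implicit Defensive.

(* Permutations of {1..N} are modelled as {perm 'I_N}, positions/values
   shifted to 0-based: the one-line entry x_j (1-based) is (x (j-1)) + 1. *)

(* simple transposition s_i (1 <= i <= N-1): exchanges i and i+1, i.e. the
   0-based points i-1 and i *)
Definition simple_tr (N i : nat) : {perm 'I_N} :=
  match @insub nat (fun k => k < N) _ i.-1, @insub nat (fun k => k < N) _ i with
  | Some a, Some b => tperm a b
  | _, _ => 1%g
  end.

Definition valid_word (N : nat) (w : seq nat) : bool :=
  all (fun i => (0 < i) && (i < N)) w.

(* s_{i1} ... s_{ik}, composed as functions (s_{ik} applied first).
   In mathcomp (p * q) x = q (p x), hence the order below. *)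
Fixpoint perm_of_word (N : nat) (w : seq nat) : {perm 'I_N} :=
  match w with
  | [::] => 1%g
  | i :: w' => (perm_of_word N w' * simple_tr N i)%g
  end.

Definition reduced_word (N : nat) (x : {perm 'I_N}) (w : seq nat) : Prop :=
  valid_word N w /\ perm_of_word N w = x /\
  forall w', valid_word N w' -> perm_of_word N w' = x -> size w <= size w'.

(* defining relations of H_0(S_N) *)
Inductive hecke_gen (N : nat) : seq nat -> seq nat -> Prop :=
| hg_idem i : 0 < i < N -> hecke_gen N [:: i; i] [:: i]
| hg_comm i j : 0 < i < N -> 0 < j < N -> (i + 2 <= j) || (j + 2 <= i) ->
    hecke_gen N [:: i; j] [:: j; i]
| hg_braid i : 0 < i -> i.+1 < N -> hecke_gen N [:: i; i.+1; i] [:: i.+1; i; i.+1].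

(* defining relations of the quotient (target of phi): those of H_0(S_N)
   plus pi_i pi_{i+1} pi_i = pi_i pi_{i+1} *)
Inductive phi_gen (N : nat) : seq nat -> seq nat -> Prop :=
| pg_hecke a b : hecke_gen N a b -> phi_gen N a b
| pg_extra i : 0 < i -> i.+1 < N -> phi_gen N [:: i; i.+1; i] [:: i; i.+1].

Definition in_context (R : seq nat -> seq nat -> Prop) (x y : seq nat) : Prop :=
  exists u v a b, R a b /\ x = u ++ a ++ v /\ y = u ++ b ++ v.

(* monoid congruence generated by R: equality in the presented monoid *)
Definition cong_of (R : seq nat -> seq nat -> Prop) : relation (seq nat) :=
  clos_refl_sym_trans (seq nat) (in_context R).

(* phi(pi_w) = phi(pi_w') *)
Definition phi_eq (N : nat) (w w' : seq nat) : Prop := cong_of (phi_gen N) w w'.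

Definition psi_word (N : nat) (w : seq nat) : seq nat := map (fun i => N - i) w.

(* omega(pi_w) = omega(pi_w') *)
Definition omega_eq (N : nat) (w w' : seq nat) : Prop :=
  phi_eq N w w' /\ phi_eq N (psi_word N w) (psi_word N w').

Definition is_4321 (N : nat) (x : {perm 'I_N}) (p q r s : 'I_N) : bool :=
  [&& p < q, q < r, r < s, x q < x p, x r < x q & x s < x r].

Definition lex3_le (a b c a' b' c' : nat) : Prop :=
  a < a' \/ (a = a' /\ (b < b' \/ (b = b' /\ c <= c'))).

Definition minimal_4321 (N : nat) (x : {perm 'I_N}) (p q r s : 'I_N) : Prop :=
  is_4321 x p q r s /\
  forall p' q' r' s' : 'I_N, is_4321 x p' q' r' s' ->
    lex3_le (q - p) (r - q) (s - r) (q' - p') (r' - q') (s' - r').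

From mathcomp Require Import all_boot all_order all_fingroup.
From mathcomp Require Import zify.
From Stdlib Require Import Relations.
Set Implicit Arguments. Unset Strict Implicit. Unset Printing Implicit Defensive.

(* For a reduced word w of x, the image of pi_w in the quotient by
   pi_i pi_{i+1} pi_i = pi_i pi_{i+1} is the normal form nf f (N-1), a product
   of runs pi_{f k + 1} ... pi_k, where f k = min_{j >= k} x_j is the function of
   suffix minima of x (positions and values 0-based).  Applying Psi replaces
   suffix minima by prefix maxima.  Exchanging the two middle entries of a
   [4321]-pattern changes neither: the last entry of the pattern is smaller than
   both exchanged entries and the first one is larger than both. *)

Lemma downward_ind N (P : nat -> Prop) :
  (forall j, N <= j -> P j) -> (forall j, j < N -> P j.+1 -> P j) -> forall j, P j.
Proof.
move=> base step j; elim: {j}(N - j) {-2}j (leqnn (N - j)) => [|k IH] j hj.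
  by apply: base; lia.
have [/base//|jN] := leqP N j.
by apply: step => //; apply: IH; lia.
Qed.

Section SuffixMinimaPrefixMaxima.

Variable X : nat -> nat.

Definition sufmin N j := \big[minn/N]_(j <= k < N) X k.
Definition premax n := \max_(0 <= k < n) X k.

Lemma sufminS N j : j < N -> sufmin N j = minn (X j) (sufmin N j.+1).
Proof. by move=> jN; rewrite /sufmin big_ltn. Qed.

Lemma sufmin_out N j : N <= j -> sufmin N j = N.
Proof. by move=> Nj; rewrite /sufmin big_geq. Qed.

Lemma premaxS n : premax n.+1 = maxn (premax n) (X n).
Proof. by rewrite /premax big_nat_recr. Qed.

Lemma premax0 : premax 0 = 0.
Proof. by rewrite /premax big_geq. Qed.

Lemma sufmin_le N j k : j <= k < N -> sufmin N j <= X k.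
Proof.
elim/(downward_ind (N := N)): j => [j Nj|j jN IH] /andP[jk kN]; first lia.
rewrite sufminS //; have [<-|jk'] := eqVneq j k; first exact: geq_minl.
by rewrite geq_min IH ?orbT //; apply/andP; split; lia.
Qed.

Lemma leq_premax n k : k < n -> X k <= premax n.
Proof. by move=> kn; apply: (leq_bigmax_seq k) => //; rewrite mem_index_iota. Qed.

End SuffixMinimaPrefixMaxima.

Lemma eq_sufmin X Y N j : (forall k, k < N -> X k = Y k) -> sufmin X N j = sufmin Y N j.
Proof. by move=> XY; apply: eq_big_nat => k /andP[_ /XY]. Qed.

Lemma eq_premax X Y n : (forall k, k < n -> X k = Y k) -> premax X n = premax Y n.
Proof. by move=> XY; apply: eq_big_nat => k /andP[_ /XY]. Qed.

Definition swapn (a b k : nat) := if k == a then b else if k == b then a else k.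

Definition lowerat (i j : nat) := if j == i then i.-1 else j.

Lemma swapn_adjacent_ltn (a c d : nat) :
  ((c != a) || (d != a.+1)) && (c < d) =
  ((swapn a a.+1 c != a) || (swapn a a.+1 d != a.+1)) && (swapn a a.+1 c < swapn a a.+1 d).
Proof.
by rewrite /swapn; case: (c =P a); case: (c =P a.+1); case: (d =P a); case: (d =P a.+1); lia.
Qed.

Lemma sufmin_swap_ascent N X i : 0 < i < N -> X i.-1 < X i ->
  forall j, sufmin (X \o swapn i.-1 i) N j = sufmin X N (lowerat i j).
Proof.
move=> /andP[i0 iN] asc; elim/(downward_ind (N := N)) => j jN.
  by rewrite /lowerat; case: eqP => [ji|_]; rewrite !sufmin_out //; lia.
move=> IH; rewrite sufminS // IH /lowerat /swapn /=.
have [->|ji] := eqVneq j i.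
  rewrite ifN_eq ?ifN_eq; try lia.
  rewrite [in RHS]sufminS ?prednK ?(sufminS _ iN); lia.
have [ji1|ji1] := eqVneq j.+1 i.
  have -> : j = i.-1 by lia.
  by rewrite eqxx; apply/minn_idPr/sufmin_le; lia.
by rewrite ifN_eq ?[RHS]sufminS //; lia.
Qed.

Lemma premax_swap_ascent X i : 0 < i -> X i.-1 < X i ->
  forall n, premax (X \o swapn i.-1 i) n = premax X (if n == i then i.+1 else n).
Proof.
move=> i0 asc; elim=> [|n IH]; first by rewrite ifN_eq ?premax0 //; lia.
rewrite premaxS IH /swapn /=.
have [->|ni] := eqVneq n i.
  rewrite ifN_eq ?ifN_eq; try lia.
  by apply/maxn_idPl; apply: leq_premax; lia.
have [ni1|ni1] := eqVneq n.+1 i.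
  subst i; rewrite /= eqxx ifN_eq // in IH *.
  by rewrite !premaxS /= in asc *; lia.
by rewrite ifN_eq ?premaxS //; lia.
Qed.

Lemma sufmin_swap_dominated N X q r s : q < r < s -> s < N ->
  X s < X q -> X s < X r ->
  forall j, sufmin (X \o swapn q r) N j = sufmin X N j.
Proof.
move=> /andP[qr rs] sN sq sr; elim/(downward_ind (N := N)) => j jN.
  by rewrite !sufmin_out.
move=> IH; rewrite !(sufminS _ jN) IH /swapn /=.
have [->|_] := eqVneq j q.
  by have := sufmin_le X (_ : q.+1 <= s < N); lia.
have [->|//] := eqVneq j r.
by have := sufmin_le X (_ : r.+1 <= s < N); lia.
Qed.

Lemma premax_swap_dominated X p q r : p < q < r ->
  X q < X p -> X r < X p ->
  forall n, premax (X \o swapn q r) n = premax X n.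
Proof.
move=> /andP[pq qr] qp rp; elim=> [|n IH]; first by rewrite !premax0.
rewrite !premaxS IH /swapn /=.
have [->|_] := eqVneq n q; first by have := leq_premax X pq; lia.
have [->|//] := eqVneq n r.
by have := leq_premax X (_ : p < r); lia.
Qed.

Lemma sufmin_id N j : j < N -> sufmin id N j = j.
Proof.
elim/(downward_ind (N := N)): j => [j Nj jN|j jN IH _]; first lia.
rewrite sufminS //=; have [j1N|Nj1] := ltnP j.+1 N.
  by rewrite IH //; lia.
by rewrite sufmin_out //; lia.
Qed.

Lemma premax_id n : premax id n = n.-1.
Proof. by elim: n => [|n IH]; rewrite ?premax0 // premaxS IH /=; lia. Qed.

Definition run (a i : nat) := iota a.+1 (i - a).

Lemma run_nil a i : i <= a -> run a i = [::].
Proof. by move=> ia; rewrite /run (eqP ia). Qed.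

Lemma run_cons a i : a < i -> run a i = a.+1 :: run a.+1 i.
Proof. by move=> ai; rewrite /run -subnSK. Qed.

Lemma run_cat a b i : a <= b <= i -> run a i = run a b ++ run b i.
Proof.
move=> abi; rewrite /run (_ : i - a = (b - a) + (i - b)) ?iotaD; last lia.
by rewrite (_ : a.+1 + (b - a) = b.+1) //; lia.
Qed.

Lemma run_rcons a i : a <= i -> run a i.+1 = rcons (run a i) i.+1.
Proof.
by move=> ai; rewrite (@run_cat a i) ?leqnSn ?ai // (@run_cons i) // (@run_nil i.+1) ?cats1.
Qed.

Lemma mem_run a i l : (l \in run a i) = (a < l <= i).
Proof. by rewrite /run mem_iota; lia. Qed.

Fixpoint nf (f : nat -> nat) (k : nat) : seq nat :=
  if k is k'.+1 then run (f k) k ++ nf f k' else [::].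

Lemma nf_pred f k : nf f k = run (f k) k ++ nf f k.-1.
Proof. by case: k => //=; rewrite run_nil. Qed.

Lemma mem_nf f k l : l \in nf f k -> 0 < l <= k.
Proof. by elim: k => [|k IH] //=; rewrite mem_cat mem_run => /orP[|/IH]; lia. Qed.

Lemma eq_nf f g k : (forall j, j <= k -> f j = g j) -> nf f k = nf g k.
Proof.
elim: k => [|k IH] fg //=; rewrite fg // IH // => j jk; apply: fg; lia.
Qed.

Lemma nf_id k : nf id k = [::].
Proof. by elim: k => //= k ->; rewrite run_nil. Qed.

Definition admissible (f : nat -> nat) := (forall j, f j <= j) /\ {homo f : j k / j <= k}.

Definition phi_code (w : seq nat) : nat -> nat :=
  foldl (fun f i => f \o lowerat i) id w.

Lemma phi_code_rcons w i : phi_code (rcons w i) = phi_code w \o lowerat i.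
Proof. by rewrite /phi_code foldl_rcons. Qed.

Lemma admissible_phi_code w : admissible (phi_code w).
Proof.
elim/last_ind: w => [|w i [le_f homo_f]]; first by split.
rewrite phi_code_rcons; split=> [j|j k jk] /=; rewrite /lowerat.
  by case: eqP => [->|_]; [have := le_f i.-1; lia | exact: le_f].
by apply: homo_f; do 2 case: eqP; lia.
Qed.

Section PresentedMonoid.

Variable N : nat.

Lemma phi_eq_refl u : phi_eq N u u.
Proof. exact: rst_refl. Qed.

Lemma phi_eq_sym u v : phi_eq N u v -> phi_eq N v u.
Proof. exact: rst_sym. Qed.

Lemma phi_eq_trans u v w : phi_eq N u v -> phi_eq N v w -> phi_eq N u w.
Proof. exact: rst_trans. Qed.

Lemma phi_eq_cat a b u v : phi_eq N u v -> phi_eq N (a ++ u ++ b) (a ++ v ++ b).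
Proof.
elim=> [x y [u0 [v0 [a0 [b0 [H [-> ->]]]]]]|x|x y _|x y z _ IH1 _ IH2].
- by apply: rst_step; exists (a ++ u0), (v0 ++ b), a0, b0; rewrite !catA.
- exact: rst_refl.
- exact: rst_sym.
- exact: rst_trans IH2.
Qed.

Lemma phi_eq_catl a u v : phi_eq N u v -> phi_eq N (a ++ u) (a ++ v).
Proof. by move/(phi_eq_cat a [::]); rewrite !cats0. Qed.

Lemma phi_eq_catr b u v : phi_eq N u v -> phi_eq N (u ++ b) (v ++ b).
Proof. exact: (phi_eq_cat [::] b). Qed.

Lemma phi_eq_gen a b : phi_gen N a b -> phi_eq N a b.
Proof. by move=> ab; apply: rst_step; exists [::], [::], a, b; rewrite !cats0. Qed.

Lemma phi_eq_commute c u : 0 < c < N ->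
  all (fun l => (0 < l < N) && ((l + 2 <= c) || (c + 2 <= l))) u ->
  phi_eq N (u ++ [:: c]) (c :: u).
Proof.
move=> cN; elim: u => [|l u IH] /=; first by move=> _; apply: phi_eq_refl.
case/andP=> /andP[lN lc] /IH{}IH.
apply: phi_eq_trans (phi_eq_catl [:: l] IH) _.
exact: (phi_eq_catr u (phi_eq_gen (pg_hecke (hg_comm lN cN lc)))).
Qed.

Lemma phi_eq_braid_absorb j : 0 < j -> j.+1 < N ->
  phi_eq N [:: j.+1; j; j.+1] [:: j; j.+1].
Proof.
move=> j0 jN; apply: phi_eq_trans (phi_eq_gen (pg_extra j0 jN)).
exact/phi_eq_sym/phi_eq_gen/pg_hecke/hg_braid.
Qed.

Lemma phi_eq_absorb_letter a c i : a < c <= i -> i < N ->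
  phi_eq N (c :: run a i) (run a i).
Proof.
move=> /andP[ac ci] iN; have [c1|] := eqVneq c a.+1.
  rewrite c1 (run_cons (_ : a < i)); last lia.
  by apply: (phi_eq_catr _ (phi_eq_gen (pg_hecke (@hg_idem N a.+1 _)))); lia.
move=> ca; have [b cb ab] : exists2 b, c = b.+2 & a <= b by exists c.-2; lia.
subst c.
(* c commutes leftwards with s_{a+1} ... s_b and then meets s_{c-1} s_c *)
rewrite (@run_cat a b) ?ab ?(run_cons (_ : b < i)) ?(run_cons (_ : b.+1 < i)) /=;
  try lia.
apply: phi_eq_trans (_ : phi_eq N (run a b ++ [:: b.+2, b.+1, b.+2 & run b.+2 i]) _).
  rewrite -[b.+2 :: _]/([:: b.+2] ++ _) -[_ ++ b.+2 :: _]/(_ ++ [:: b.+2] ++ _) !catA.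
  apply/phi_eq_catr/phi_eq_sym/phi_eq_commute; first lia.
  by apply/allP => l; rewrite mem_run; lia.
by apply/phi_eq_catl/(phi_eq_catr _ (@phi_eq_braid_absorb b.+1 _ _)); lia.
Qed.

Lemma phi_eq_absorb_run a b i : a <= b <= i -> i < N ->
  phi_eq N (run b i ++ run a i) (run a i).
Proof.
move=> + iN; elim/(downward_ind (N := i)): b => [b ib _|b bi IH /andP[ab _]].
  by rewrite run_nil //; apply: phi_eq_refl.
rewrite (run_cons bi) -cat1s -catA.
apply: phi_eq_trans (phi_eq_catl _ (IH _)) _; first lia.
apply: phi_eq_absorb_letter iN; lia.
Qed.

Lemma phi_eq_run_rcons a i : a < i -> i < N ->
  phi_eq N (rcons (run a i) a.+1) (run a i).
Proof.
move=> ai iN; rewrite (run_cons ai); have [<-|ai1] := eqVneq a.+1 i.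
  by rewrite run_nil //=; apply/phi_eq_gen/pg_hecke/hg_idem; lia.
rewrite (run_cons (_ : a.+1 < i)) -?cats1; last lia.
apply: phi_eq_trans (_ : phi_eq N ([:: a.+1; a.+2; a.+1] ++ run a.+2 i) _).
  rewrite -[a.+1 :: _]/([:: a.+1; a.+2] ++ _) -catA.
  apply/phi_eq_catl/phi_eq_commute; first lia.
  by apply/allP => l; rewrite mem_run; lia.
by apply/(phi_eq_catr _ (phi_eq_gen (pg_extra _ _))); lia.
Qed.

Lemma phi_eq_run_runS a k : k.+1 < N -> phi_eq N (run a k.+1 ++ run a k) (run a k.+1).
Proof.
move=> kN; elim/(downward_ind (N := k)): a => [a ka|a ak IH].
  by rewrite (run_nil ka) cats0; apply: phi_eq_refl.
rewrite (run_cons ak) -cat1s catA cats1.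
apply: phi_eq_trans (phi_eq_catr _ (phi_eq_run_rcons _ _)) _; try lia.
rewrite (run_cons (_ : a < k.+1)); last lia.
exact: (phi_eq_catl [:: a.+1] IH).
Qed.

Lemma phi_eq_nf_rcons_top f k : k.+1 < N -> admissible f ->
  phi_eq N (nf f k ++ [:: k.+1]) (run (f k) k.+1 ++ nf f k.-1).
Proof.
move=> kN [le_f _]; case: k kN => [|k] kN.
  by rewrite (_ : f 0 = 0) /=; [apply: phi_eq_refl | have := le_f 0; lia].
rewrite /= (@run_rcons _ k.+1) // -cats1 -!catA; apply/phi_eq_catl/phi_eq_commute; first lia.
by apply/allP => l /mem_nf; lia.
Qed.

Lemma phi_eq_nf_rcons f i : 0 < i < N -> admissible f ->
  phi_eq N (nf f N.-1 ++ [:: i]) (nf (f \o lowerat i) N.-1).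
Proof.
move=> iN adm_f; have [le_f homo_f] := adm_f.
suff: forall k, i <= k < N -> phi_eq N (nf f k ++ [:: i]) (nf (f \o lowerat i) k).
  by apply; lia.
elim=> [|k IH] ik; first lia.
rewrite /= -catA /lowerat; have [ki|ki] := eqVneq k.+1 i; last first.
  by apply/phi_eq_catl/IH; lia.
subst i; rewrite (@eq_nf (f \o lowerat k.+1) f k); last first.
  by move=> j jk; rewrite /= /lowerat ifN_eq //; lia.
apply: phi_eq_trans (phi_eq_catl _ (@phi_eq_nf_rcons_top f k _ adm_f)) _; first lia.
rewrite catA [nf f k]nf_pred catA.
apply: phi_eq_catr; apply: phi_eq_trans (phi_eq_absorb_run _ _) _; try lia.
  by rewrite le_f homo_f.
exact/phi_eq_sym/phi_eq_run_runS.
Qed.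

Lemma phi_eq_nf w : valid_word N w -> phi_eq N w (nf (phi_code w) N.-1).
Proof.
elim/last_ind: w => [|w i IH]; first by rewrite /= nf_id => _; apply: phi_eq_refl.
rewrite /valid_word all_rcons => /andP[iN /IH{}IH].
rewrite phi_code_rcons -cats1; apply: phi_eq_trans (phi_eq_catr _ IH) _.
exact: phi_eq_nf_rcons (admissible_phi_code w).
Qed.

Lemma valid_psi_word w : valid_word N w -> valid_word N (psi_word N w).
Proof. by rewrite /valid_word all_map => /allP wN; apply/allP => l /wN /=; lia. Qed.

Lemma phi_eq_of_phi_code w w' : valid_word N w -> valid_word N w' ->
  (forall j, j < N -> phi_code w j = phi_code w' j) -> phi_eq N w w'.
Proof.
move=> vw vw' ww'; apply: phi_eq_trans (phi_eq_nf vw) (phi_eq_sym _).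
have -> : nf (phi_code w) N.-1 = nf (phi_code w') N.-1.
  have [-> //|N0] := posnP N.
  by apply: eq_nf => j jN; apply: ww'; lia.
exact: phi_eq_nf.
Qed.

End PresentedMonoid.

Section WordsOfPermutations.

Variable N : nat.
Implicit Types (x : {perm 'I_N}) (a b : 'I_N) (w : seq nat).

Definition permn x (k : nat) : nat := if insub k is Some o then val (x o) else 0.

Lemma permnE x a : permn x a = x a.
Proof. by rewrite /permn valK. Qed.

Lemma permn1 k : k < N -> permn 1 k = k.
Proof. by move=> kN; rewrite -[k]/(val (Ordinal kN)) permnE perm1. Qed.

Lemma permn_inj x j k : j < N -> k < N -> permn x j = permn x k -> j = k.
Proof.
move=> jN kN; rewrite -[j]/(val (Ordinal jN)) -[k]/(val (Ordinal kN)) !permnE.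
by move/val_inj/perm_inj => [].
Qed.

Lemma val_tperm a b c : val (tperm a b c) = swapn a b c.
Proof. by rewrite permE /swapn /= !val_eqE; case: ifP => _ //; case: ifP. Qed.

Lemma permn_tpermM a b x : permn (tperm a b * x) =1 permn x \o swapn a b.
Proof.
move=> k /=; have [kN|Nk] := ltnP k N.
  by rewrite -[k]/(val (Ordinal kN)) permnE permM -val_tperm permnE.
have ka : k != a by apply/eqP; have := ltn_ord a; lia.
have kb : k != b by apply/eqP; have := ltn_ord b; lia.
rewrite /= /swapn (negbTE ka) (negbTE kb).
by rewrite /permn; case: insubP => // o; lia.
Qed.

Lemma simple_trE i : 0 < i < N ->
  exists a b, simple_tr N i = tperm a b /\ val a = i.-1 /\ val b = i.
Proof.
move=> iN; rewrite /simple_tr.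
case: insubP => [a _ <-|]; last lia.
by case: insubP => [b _ <-|]; [exists a, b | lia].
Qed.

Lemma perm_of_word_rcons w i :
  perm_of_word N (rcons w i) = (simple_tr N i * perm_of_word N w)%g.
Proof. by elim: w => [|j w IH] /=; rewrite ?mul1g ?mulg1 // IH mulgA. Qed.

Lemma permn_rcons w i : 0 < i < N ->
  permn (perm_of_word N (rcons w i)) =1 permn (perm_of_word N w) \o swapn i.-1 i.
Proof.
move=> iN; rewrite perm_of_word_rcons.
by have [a [b [-> [<- <-]]]] := simple_trE iN; apply: permn_tpermM.
Qed.

Definition inversions x := [set ij : 'I_N * 'I_N | (ij.1 < ij.2) && (x ij.2 < x ij.1)].

Lemma inversions1 : inversions 1%g = set0.
Proof. by apply/setP => -[c d]; rewrite !inE !perm1 /=; lia. Qed.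

Lemma card_inversions_tperm a b x : val b = (val a).+1 -> x a < x b ->
  #|inversions (tperm a b * x)| = #|inversions x|.+1.
Proof.
move=> ba asc; set F := fun ij : 'I_N * 'I_N => (tperm a b ij.1, tperm a b ij.2).
have F_inj : injective F by move=> [c d] [c' d'] [/perm_inj -> /perm_inj ->].
have E : inversions (tperm a b * x) :\ (a, b) = F @^-1: (inversions x :\ (a, b)).
  apply/setP => -[c d]; rewrite !inE /= !permM !andbA; congr (_ && _).
  rewrite !xpair_eqE !negb_and -!val_eqE /= !val_tperm ba.
  by rewrite swapn_adjacent_ltn -ba.
rewrite (cardsD1 (a, b) (inversions x)) (cardsD1 (a, b) (inversions (tperm a b * x))).
rewrite -[#|inversions x :\ _|](card_preimset _ F_inj) -E !inE /= !permM tpermL tpermR.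
have ab : a < b by rewrite ba.
by rewrite ab asc ltnNge ltnW.
Qed.

Lemma card_inversions_tpermV a b x : val b = (val a).+1 -> x b < x a ->
  #|inversions (tperm a b * x)|.+1 = #|inversions x|.
Proof.
move=> ba desc; have := @card_inversions_tperm a b (tperm a b * x) ba.
by rewrite mulgA tperm2 mul1g !permM tpermL tpermR => ->.
Qed.

Lemma card_inversions_rcons w i : 0 < i < N ->
  if permn (perm_of_word N w) i.-1 < permn (perm_of_word N w) i
  then #|inversions (perm_of_word N (rcons w i))| = #|inversions (perm_of_word N w)|.+1
  else #|inversions (perm_of_word N (rcons w i))|.+1 = #|inversions (perm_of_word N w)|.
Proof.
move=> iN; rewrite perm_of_word_rcons.
have [a [b [-> [va vb]]]] := simple_trE iN; rewrite -va -vb !permnE.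
have ba : val b = (val a).+1 by lia.
case: ltngtP => [asc|desc|/val_inj/perm_inj ab]; last by move: ba; rewrite ab; lia.
  exact: card_inversions_tperm.
exact: card_inversions_tpermV.
Qed.

Inductive ascending : seq nat -> Prop :=
| ascending_nil : ascending [::]
| ascending_rcons w i : ascending w -> 0 < i < N ->
    permn (perm_of_word N w) i.-1 < permn (perm_of_word N w) i -> ascending (rcons w i).

Lemma card_inversions_word w : valid_word N w ->
  #|inversions (perm_of_word N w)| <= size w /\
  (#|inversions (perm_of_word N w)| = size w -> ascending w).
Proof.
elim/last_ind: w => [_|w i IH].
  by rewrite /= inversions1 cards0; split=> // _; constructor.
rewrite /valid_word all_rcons size_rcons => /andP[iN /IH[le_w eq_w]].
have := card_inversions_rcons w iN; case: ifP => [asc ->|_ E].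
  by split=> [|eqS]; [|constructor => //; apply: eq_w]; lia.
by split=> [|eqS]; [|exfalso]; lia.
Qed.

Lemma increasing_bounded_id (X : nat -> nat) : (forall k, k.+1 < N -> X k < X k.+1) ->
  (forall k, k < N -> X k < N) -> forall k, k < N -> X k = k.
Proof.
move=> incr bnd.
have shift d k : k + d < N -> X k + d <= X (k + d).
  elim: d => [|d IH] kd; first by rewrite !addn0.
  rewrite addnS in kd *; have := IH (ltnW kd); have := incr _ kd; lia.
move=> k kN; have lo := shift k 0; have hi := shift (N.-1 - k) k.
rewrite add0n in lo; rewrite subnKC in hi; last lia.
have := lo kN; have := hi (_ : N.-1 < N); have := bnd N.-1 (_ : N.-1 < N); lia.
Qed.

Lemma descent_or_id x :
  (exists2 i, 0 < i < N & permn x i < permn x i.-1) \/ x = 1%g.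
Proof.
have [/existsP[i /andP[i0 desc]]|/existsPn asc] :=
    boolP [exists i : 'I_N, (0 < i) && (permn x i < permn x i.-1)].
  by left; exists i; rewrite ?i0 ?ltn_ord.
right; apply/permP => a; apply: val_inj; rewrite perm1 /= -permnE.
apply: increasing_bounded_id (ltn_ord a) => [k kN|k kN].
  have := asc (Ordinal kN); rewrite /= -leqNgt.
  have := @permn_inj x k k.+1 (ltnW kN) kN; lia.
by rewrite -[k]/(val (Ordinal kN)) permnE.
Qed.

Lemma word_of_inversions n x : #|inversions x| = n ->
  exists w, [/\ valid_word N w, perm_of_word N w = x & size w = n].
Proof.
elim: n x => [|n IH] x invx; have [[i iN desc]|x1] := descent_or_id x.
- have [a [b [_ [va vb]]]] := simple_trE iN.
  have ba : val b = (val a).+1 by lia.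
  rewrite -va -vb !permnE in desc.
  by have := card_inversions_tpermV ba desc; lia.
- by exists [::]; rewrite x1.
- have [a [b [ab [va vb]]]] := simple_trE iN.
  have ba : val b = (val a).+1 by lia.
  rewrite -va -vb !permnE in desc.
  have := card_inversions_tpermV ba desc; rewrite invx => /eqP; rewrite eqSS.
  move=> /eqP/IH[w [vw xw sw]].
  exists (rcons w i); split; last by rewrite size_rcons sw.
    by rewrite /valid_word all_rcons iN.
  by rewrite perm_of_word_rcons xw ab mulgA tperm2 mul1g.
- by rewrite x1 inversions1 cards0 in invx.
Qed.

Lemma reduced_ascending x w : reduced_word x w -> ascending w.
Proof.
move=> [vw [xw min_w]]; have [w0 [vw0 xw0 sw0]] := word_of_inversions (erefl #|inversions x|).
have [le_w eq_w] := card_inversions_word vw; apply: eq_w.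
by have := min_w w0 vw0 xw0; rewrite xw sw0 in le_w *; lia.
Qed.

Lemma phi_code_sufmin w : ascending w ->
  forall j, j < N -> phi_code w j = sufmin (permn (perm_of_word N w)) N j.
Proof.
elim=> {w} [|w i _ IH iN asc] j jN.
  by rewrite (eq_sufmin (Y := id)) ?sufmin_id // => k; apply: permn1.
rewrite phi_code_rcons /= IH; last by rewrite /lowerat; case: eqP; lia.
by rewrite -sufmin_swap_ascent //; apply: eq_sufmin => k _; rewrite permn_rcons.
Qed.

Lemma phi_code_psi w : ascending w -> forall j, j < N ->
  phi_code (psi_word N w) j = N.-1 - premax (permn (perm_of_word N w)) (N - j).
Proof.
elim=> {w} [|w i _ IH iN asc] j jN.
  rewrite (eq_premax (Y := id)) ?premax_id /phi_code /=; first lia.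
  by move=> k kj; apply: permn1; lia.
rewrite /psi_word map_rcons -/(psi_word N w) phi_code_rcons /= IH; last first.
  by rewrite /lowerat; case: eqP; lia.
rewrite (eq_premax (X := permn (perm_of_word N (rcons w i)))
                   (Y := permn (perm_of_word N w) \o swapn i.-1 i)); last first.
  by move=> k _; rewrite permn_rcons.
rewrite premax_swap_ascent //; last by case/andP: iN.
by congr (_ - premax _ _); rewrite /lowerat; case: eqP; case: eqP; lia.
Qed.

End WordsOfPermutations.

Theorem mainTheorem13 (N : nat) (x : {perm 'I_N}) (p q r s : 'I_N) :
  minimal_4321 x p q r s ->
  forall w w' : seq nat,
    reduced_word x w -> reduced_word (tperm q r * x)%g w' ->
    omega_eq N w w'.
Proof.
move=> [/and5P[pq qr rs xqp /andP[xrq xsr]] _] w w' red_w red_w'.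
have [[vw [xw _]] [vw' [xw' _]]] := (red_w, red_w').
have [asc_w asc_w'] := (reduced_ascending red_w, reduced_ascending red_w').
have swap_x := @permn_tpermM N q r x.
have [X_qp X_rp X_sq X_sr] :
    [/\ permn x q < permn x p, permn x r < permn x p,
        permn x s < permn x q & permn x s < permn x r].
  by rewrite !permnE; split; lia.
split; apply: phi_eq_of_phi_code; rewrite ?valid_psi_word // => j jN.
  rewrite (phi_code_sufmin asc_w jN) (phi_code_sufmin asc_w' jN) xw xw'.
  rewrite (@eq_sufmin _ _ N j (fun k _ => swap_x k)).
  by apply/esym/(sufmin_swap_dominated (s := s)); rewrite ?qr ?rs ?ltn_ord.
rewrite (phi_code_psi asc_w jN) (phi_code_psi asc_w' jN) xw xw'.
rewrite (@eq_premax _ _ (N - j) (fun k _ => swap_x k)).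
by rewrite (premax_swap_dominated (p := p)) ?pq.
Qed.
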